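(* Let $\lambda,\zeta\leq 0$, $f_S(y)=\zeta y$, $f_F(y)=\lambda y$, $\eta>0$, $\tau>0$, $m,s\in\mathbb{N}$ and $y\in\mathbb{R}$. Then one step of the mROCK2 method with macro-step $\tau$, micro-step $\eta$, $m$ micro stages and $s$ macro stages applied to $\dot y=f_F(y)+f_S(y)$ gives $y_{n+1}=R_{s,m}(\lambda,\zeta,\tau,\eta)\,y_n$ with $$R_{s,m}(\lambda,\zeta,\tau,\eta)=R_s\!\left(\tau\,\Phi_m(\eta\lambda)(\lambda+\zeta)\Bigl(1-\frac{\eta\lambda\alpha_m}{2}\Phi_m(\eta\lambda)\Bigr)\right),$$ where $\Phi_m(z)=\frac{P_m(z)-1}{z}$ ($\Phi_m(0)=1$), $\alpha_m=P_m''(0)$, and $R_s$ is the stability polynomial of the $s$-stage ROCK2 scheme.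
   Context: RKC method (micro method). For damping $\varepsilon\geq 0$ and $m$ stages, let $T_j$ be the Chebyshev polynomials ($T_0=1$, $T_1(x)=x$, $T_j=2xT_{j-1}-T_{j-2}$), $\omega_0=1+\varepsilon/m^2$, $\omega_1=T_m(\omega_0)/T_m'(\omega_0)$, $b_j=1/T_j(\omega_0)$. One step of size $h$ for $\dot u=g(u)$ from $u_0$: $k_0=u_0$, $k_1=k_0+\frac{\omega_1}{\omega_0}h\,g(k_0)$, $k_j=\nu_jk_{j-1}+\kappa_jk_{j-2}+\mu_jh\,g(k_{j-1})$ for $j=2,\dots,m$, with $\mu_j=2\omega_1b_j/b_{j-1}$, $\nu_j=2\omega_0b_j/b_{j-1}$, $\kappa_j=-b_j/b_{j-2}$; the result is $k_m$. Its stability polynomial is $P_m(z)=b_mT_m(\omega_0+\omega_1z)$. ROCK2 method (macro method): an explicit $s$-stage Runge–Kutta method; applied to $\dot y=\kappa y$ with step $\tau$ it gives $y_{n+1}=R_s(\tau\kappa)y_n$, $R_s$ being its stability polynomial. mROCK2 step for $\dot y=f_F(y)+f_S(y)$: define $\bar f_{\eta,2}(y)$ by (i) $u_\eta$ = one RKC step of size $\eta$ for $\dot u=f_F(u)+f_S(y)$, $u(0)=y$; (ii) $\bar f_{\eta,1}(y)=(u_\eta-y)/\eta$; (iii) $v_\eta$ = one RKC step of size $\eta$ for $\dot v=f_F\bigl(v-\frac{\alpha_m\eta}{2}\bar f_{\eta,1}(y)\bigr)+f_S(y)$, $v(0)=y$; (iv) $\bar f_{\eta,2}(y)=(v_\eta-y)/\eta$.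 Then $y_{n+1}$ is one ROCK2 step of size $\tau$ from $y_n$ for $\dot y=\bar f_{\eta,2}(y)$. *)

From HB Require Import structures.
From mathcomp Require Import all_boot all_order all_algebra.
Set Implicit Arguments. Unset Strict Implicit. Unset Printing Implicit Defensive.
Import Order.TTheory GRing.Theory Num.Theory.
Local Open Scope ring_scope.

Section Defs.
Variable R : realFieldType.

Fixpoint cheb_pair (n : nat) : {poly R} * {poly R} :=
  match n with
  | 0 => (1, 'X)
  | n'.+1 => let p := cheb_pair n' in (p.2, 2%:R *: 'X * p.2 - p.1)
  end.
Definition cheb (n : nat) : {poly R} := (cheb_pair n).1.

Definition omega0 (eps : R) (m : nat) : R := 1 + eps / (m%:R ^+ 2).
Definition omega1 (eps : R) (m : nat) : R :=
  (cheb m).[omega0 eps m] / ((cheb m)^`()).[omega0 eps m].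
Definition rkc_b (eps : R) (m j : nat) : R := ((cheb j).[omega0 eps m])^-1.
Definition rkc_mu eps m j : R := 2 * omega1 eps m * rkc_b eps m j / rkc_b eps m j.-1.
Definition rkc_nu eps m j : R := 2 * omega0 eps m * rkc_b eps m j / rkc_b eps m j.-1.
Definition rkc_kappa eps m j : R := - (rkc_b eps m j / rkc_b eps m j.-2).

(* rkc_ks j = (k_j, k_(j+1)) *)
Fixpoint rkc_ks (eps : R) (m : nat) (g : R -> R) (h u0 : R) (j : nat) : R * R :=
  match j with
  | 0 => (u0, u0 + omega1 eps m / omega0 eps m * h * g u0)
  | j'.+1 => let p := rkc_ks eps m g h u0 j' in
      (p.2, rkc_nu eps m j.+1 * p.2 + rkc_kappa eps m j.+1 * p.1
              + rkc_mu eps m j.+1 * h * g p.2)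
  end.

Definition rkc_step (eps : R) (m : nat) (g : R -> R) (h u0 : R) : R :=
  (rkc_ks eps m g h u0 m).1.

Definition rkc_P (eps : R) (m : nat) : {poly R} :=
  rkc_b eps m m *: (cheb m \Po ((omega0 eps m)%:P + omega1 eps m *: 'X)).
Definition alpha (eps : R) (m : nat) : R := ((rkc_P eps m)^`(2)).[0].
Definition Phi (eps : R) (m : nat) (z : R) : R :=
  if z == 0 then 1 else ((rkc_P eps m).[z] - 1) / z.

(* Explicit s-stage Runge-Kutta method with Butcher coefficients a i j
   (only j < i used) and weights b i. *)
Fixpoint erk_stages (a : nat -> nat -> R) (f : R -> R) (tau y : R) (i : nat)
  : seq R :=
  match i with
  | 0 => [::]
  | i'.+1 => let L := erk_stages a f tau y i' in
      rcons L (y + tau * \sum_(j < i') a i' j * f (nth 0 L j))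
  end.
Definition erk_step (a : nat -> nat -> R) (b : nat -> R) (s : nat)
  (f : R -> R) (tau y : R) : R :=
  let L := erk_stages a f tau y s in
  y + tau * \sum_(i < s) b i * f (nth 0 L i).

Definition erk_A (a : nat -> nat -> R) (s : nat) : 'M[R]_s :=
  \matrix_(i < s, j < s) (if (j < i)%N then a i j else 0).
Definition erk_stab (a : nat -> nat -> R) (b : nat -> R) (s : nat) (z : R) : R :=
  1 + z * (((\row_(i < s) b i) *m invmx (1%:M - z *: erk_A a s)
            *m (const_mx 1 : 'cV[R]_s)) : 'M[R]_1) ord0 ord0.

Definition fbar1 eps m (fF fS : R -> R) (eta y : R) : R :=
  (rkc_step eps m (fun u => fF u + fS y) eta y - y) / eta.
Definition fbar2 eps m (fF fS : R -> R) (eta y : R) : R :=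
  (rkc_step eps m
     (fun v => fF (v - alpha eps m * eta / 2 * fbar1 eps m fF fS eta y) + fS y)
     eta y - y) / eta.
Definition mrock2_step (a : nat -> nat -> R) (b : nat -> R) (s : nat)
  (eps : R) (m : nat) (fF fS : R -> R) (tau eta y : R) : R :=
  erk_step a b s (fbar2 eps m fF fS eta) tau y.
End Defs.

(* The method is linear in y when f_F and f_S are, so everything reduces to
   evaluating each stage on an affine right-hand side.  For g affine with slope
   lam, the RKC stages are k_j = u0 + h g(u0) Phi_j(h lam), where Phi_j(z) is
   the j-th stage of RKC applied to u' = 1 + z u from 0 with step 1; the
   three-term recurrence of Phi_j is that of the Chebyshev polynomials, whence
   z Phi_j(z) = b_j T_j(omega0 + omega1 z) - 1 = P_j(z) - 1 and
   Phi_j(0) = P_j'(0), which for j = m is 1 by the choice of omega1.  Hence both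
   averaged forces fbar_{eta,1}, fbar_{eta,2} are linear in y, the second with
   slope Phi_m(eta lam) (lam + zeta) (1 - eta lam alpha_m Phi_m(eta lam) / 2),
   and an explicit Runge-Kutta step for y' = K y multiplies y by its stability
   function at tau K, since the stage vector Y solves (1 - tau K A) Y = y 1.
   Only eps >= 0, m > 0 (so that no Chebyshev value or slope in the
   coefficients vanishes) and eta != 0 are needed. *)
From HB Require Import structures.
From mathcomp Require Import all_boot all_order all_algebra.
From mathcomp Require Import ring lra.
Set Implicit Arguments. Unset Strict Implicit. Unset Printing Implicit Defensive.
Import Order.TTheory GRing.Theory Num.Theory.
Local Open Scope ring_scope.

Section Chebyshev.
Variable R : realFieldType.
Implicit Types (x : R) (n : nat).

Lemma cheb0 : cheb R 0 = 1. Proof. by []. Qed.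
Lemma cheb1 : cheb R 1 = 'X. Proof. by []. Qed.

Lemma horner_chebSS x n :
  (cheb R n.+2).[x] = 2 * x * (cheb R n.+1).[x] - (cheb R n).[x].
Proof. by rewrite /cheb /= !hornerE. Qed.

Lemma horner_deriv_chebSS x n :
  ((cheb R n.+2)^`()).[x] =
    2 * (cheb R n.+1).[x] + 2 * x * ((cheb R n.+1)^`()).[x]
    - ((cheb R n)^`()).[x].
Proof. rewrite /cheb /= !derivE !hornerE; ring. Qed.

Lemma cheb_ge1_homo x : 1 <= x -> forall n,
  1 <= (cheb R n).[x] <= (cheb R n.+1).[x].
Proof.
move=> x_ge1; elim=> [|n /andP[T_ge1 T_le]].
  by rewrite cheb0 cheb1 !hornerE lexx.
by rewrite horner_chebSS; apply/andP; split; nra.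
Qed.

Lemma deriv_cheb_ge1_homo x : 1 <= x -> forall n,
  0 <= ((cheb R n)^`()).[x] /\
  ((cheb R n)^`()).[x] + 1 <= ((cheb R n.+1)^`()).[x].
Proof.
move=> x_ge1; elim=> [|n [dT_ge0 dT_le]].
  by rewrite cheb0 cheb1 !derivE !hornerE; split; lra.
have /andP[T_ge1 _] := cheb_ge1_homo x_ge1 n.+1.
by rewrite horner_deriv_chebSS; split; nra.
Qed.

Lemma cheb_ge1_neq0 x n : 1 <= x -> (cheb R n).[x] != 0.
Proof.
move=> /cheb_ge1_homo/(_ n)/andP[T_ge1 _].
by apply/eqP => T0; rewrite T0 in T_ge1; lra.
Qed.

Lemma deriv_cheb_ge1_neq0 x n : 1 <= x -> (0 < n)%N ->
  ((cheb R n)^`()).[x] != 0.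
Proof.
case: n => // n /deriv_cheb_ge1_homo/(_ n)[dT_ge0 dT_le] _.
by apply/eqP => dT0; rewrite dT0 in dT_le; lra.
Qed.

End Chebyshev.

Section RKC.
Variables (R : realFieldType) (eps : R) (m : nat).
Hypothesis eps_ge0 : 0 <= eps.

Local Notation w0 := (omega0 eps m).
Local Notation w1 := (omega1 eps m).

Lemma omega0_ge1 : 1 <= w0.
Proof.
have : 0 <= eps / m%:R ^+ 2 by rewrite divr_ge0 ?exprn_ge0 ?ler0n.
by rewrite /omega0; lra.
Qed.

Lemma omega0_neq0 : w0 != 0.
Proof. by have := omega0_ge1; apply: contraTneq => ->; lra. Qed.

Let T_neq0 j : (cheb R j).[w0] != 0 := cheb_ge1_neq0 j omega0_ge1.

Lemma rkc_nu_kappa j : rkc_nu eps m j.+2 + rkc_kappa eps m j.+2 = 1.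
Proof.
rewrite /rkc_nu /rkc_kappa /rkc_b /=.
have := T_neq0 j.+2; rewrite !horner_chebSS.
by move=> T2_neq0; field; rewrite T_neq0 T_neq0 T2_neq0.
Qed.

Definition rkc_phi (z : R) (j : nat) : R :=
  (rkc_ks eps m (fun u => 1 + z * u) 1 0 j).1.

Lemma rkc_phi0 z : rkc_phi z 0 = 0. Proof. by []. Qed.

Lemma rkc_phi1 z : rkc_phi z 1 = w1 / w0.
Proof. by rewrite /rkc_phi /= mulr0 addr0 !mulr1 add0r. Qed.

Lemma rkc_phiSS z j :
  rkc_phi z j.+2 = rkc_nu eps m j.+2 * rkc_phi z j.+1
    + rkc_kappa eps m j.+2 * rkc_phi z j
    + rkc_mu eps m j.+2 * (1 + z * rkc_phi z j.+1).
Proof. by rewrite /rkc_phi /= mulr1. Qed.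

Lemma rkc_ks_affine (g : R -> R) (lam h u0 : R) :
  (forall u e, g (u + e) = g u + lam * e) -> forall j,
  rkc_ks eps m g h u0 j =
    (u0 + h * g u0 * rkc_phi (h * lam) j,
     u0 + h * g u0 * rkc_phi (h * lam) j.+1).
Proof.
move=> g_affine; elim=> [|j IHj]; first by rewrite /rkc_phi /=; congr (_, _); ring.
rewrite [LHS]/= IHj /= g_affine rkc_phiSS.
have -> : rkc_kappa eps m j.+2 = 1 - rkc_nu eps m j.+2.
  by rewrite -(rkc_nu_kappa j); ring.
by congr (_, _); ring.
Qed.

Lemma rkc_phi_stab z j :
  z * rkc_phi z j = rkc_b eps m j * (cheb R j).[w0 + w1 * z] - 1.
Proof.
elim/ltn_ind: j => -[|[|j]] IHj.
- by rewrite rkc_phi0 /rkc_b cheb0 !hornerE invr1; ring.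
- rewrite rkc_phi1 /rkc_b cheb1 !hornerX.
  by field; rewrite omega0_neq0.
have -> : z * rkc_phi z j.+2 =
    rkc_nu eps m j.+2 * (z * rkc_phi z j.+1) + rkc_kappa eps m j.+2 * (z * rkc_phi z j)
    + rkc_mu eps m j.+2 * (z + z * (z * rkc_phi z j.+1)).
  by rewrite rkc_phiSS; ring.
rewrite IHj // IHj // horner_chebSS /rkc_nu /rkc_kappa /rkc_mu /rkc_b /=.
have := T_neq0 j.+2; rewrite horner_chebSS => T2_neq0.
by field; rewrite T_neq0 T_neq0 T2_neq0.
Qed.

Lemma rkc_phi_at0 j :
  rkc_phi 0 j = w1 * rkc_b eps m j * ((cheb R j)^`()).[w0].
Proof.
elim/ltn_ind: j => -[|[|j]] IHj.
- by rewrite rkc_phi0 cheb0 !derivE !hornerE; ring.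
- by rewrite rkc_phi1 /rkc_b cheb1 !derivE !hornerE; ring.
rewrite rkc_phiSS IHj // IHj // horner_deriv_chebSS /rkc_nu /rkc_kappa /rkc_mu /rkc_b /=.
have := T_neq0 j.+2; rewrite horner_chebSS => T2_neq0.
by field; rewrite T_neq0 T_neq0 T2_neq0.
Qed.

Hypothesis m_gt0 : (0 < m)%N.

Lemma Phi_rkc_phi z : Phi eps m z = rkc_phi z m.
Proof.
rewrite /Phi; have [->|z_neq0] := eqVneq z 0.
  rewrite rkc_phi_at0 /w1 /omega1 /rkc_b.
  by field; rewrite T_neq0 deriv_cheb_ge1_neq0 ?omega0_ge1.
rewrite /rkc_P hornerZ horner_comp !hornerE -rkc_phi_stab.
by field.
Qed.

Lemma rkc_step_affine (g : R -> R) (lam h u0 : R) :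
  (forall u e, g (u + e) = g u + lam * e) ->
  rkc_step eps m g h u0 = u0 + h * g u0 * Phi eps m (h * lam).
Proof.
by move=> g_affine; rewrite /rkc_step (rkc_ks_affine h u0 g_affine) Phi_rkc_phi.
Qed.

Variables (fF fS : R -> R) (lam eta : R).
Hypothesis fF_affine : forall u e, fF (u + e) = fF u + lam * e.
Hypothesis eta_neq0 : eta != 0.

Lemma fbar1_affine y :
  fbar1 eps m fF fS eta y = (fF y + fS y) * Phi eps m (eta * lam).
Proof.
rewrite /fbar1 (@rkc_step_affine _ lam) => [|u e]; first by field.
by rewrite fF_affine; ring.
Qed.

Lemma fbar2_affine y :
  fbar2 eps m fF fS eta y =
    (fF y + fS y) * Phi eps m (eta * lam)
      * (1 - eta * lam * alpha eps m / 2 * Phi eps m (eta * lam)).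
Proof.
rewrite /fbar2 (@rkc_step_affine _ lam) => [|u e].
  by rewrite fF_affine fbar1_affine; field.
by rewrite addrAC [in LHS]fF_affine; ring.
Qed.

End RKC.

Section ExplicitRK.
Variables (R : realFieldType) (a : nat -> nat -> R) (b : nat -> R).
Variables (f : R -> R) (tau y : R).

Local Notation stages := (erk_stages a f tau y).

Lemma size_erk_stages n : size (stages n) = n.
Proof. by elim: n => //= n IHn; rewrite size_rcons IHn. Qed.

Lemma nth_erk_stages n i : (i < n)%N -> nth 0 (stages n) i = nth 0 (stages i.+1) i.
Proof.
elim: n => // n IHn; rewrite ltnS leq_eqVlt => /predU1P[->//|lt_in].
by rewrite /= nth_rcons size_erk_stages lt_in IHn.
Qed.

Lemma nth_erk_stagesE s i : (i < s)%N ->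
  nth 0 (stages s) i = y + tau * \sum_(j < i) a i j * f (nth 0 (stages s) j).
Proof.
move=> lt_is; rewrite nth_erk_stages //= nth_rcons size_erk_stages.
rewrite ltnn eqxx; congr (_ + _ * _); apply: eq_bigr => j _.
by rewrite (nth_erk_stages (ltn_ord j)) (nth_erk_stages (ltn_trans (ltn_ord j) lt_is)).
Qed.

Lemma erk_stages_linear_system s K : (forall x, f x = K * x) ->
  (1%:M - (tau * K) *: erk_A a s) *m (\col_(i < s) nth 0 (stages s) i) =
  y *: const_mx 1.
Proof.
move=> f_lin; set Y := \col_(i < s) _.
have A_Y i : \sum_(k < s) erk_A a s i k * Y k ord0 =
             \sum_(k < i) a i k * nth 0 (stages s) k.
  rewrite (big_ord_widen s (fun k => a i k * nth 0 (stages s) k) (ltnW (ltn_ord i))).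
  rewrite [RHS]big_mkcond; apply: eq_bigr => k _.
  by rewrite !mxE; case: ifP; rewrite ?mul0r.
have f_Y i : \sum_(k < i) a i k * f (nth 0 (stages s) k) =
             K * \sum_(k < i) a i k * nth 0 (stages s) k.
  by rewrite mulr_sumr; apply: eq_bigr => k _; rewrite f_lin; ring.
apply/matrixP => i j; rewrite (ord1 j) mulmxBl mul1mx -scalemxAl !mxE.
by rewrite A_Y nth_erk_stagesE // f_Y mulr1; ring.
Qed.

End ExplicitRK.

Lemma erk_unitmx (R : realFieldType) (a : nat -> nat -> R) (s : nat) (z : R) :
  (1%:M - z *: erk_A a s) \in unitmx.
Proof.
rewrite unitmxE det_trig.
  by rewrite big1 ?unitr1 // => i _; rewrite !mxE eqxx ltnn mulr0 subr0.
apply/forallP => i; apply/forallP => j; apply/implyP => lt_ij.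
by rewrite !mxE -val_eqE ltn_eqF // ltnNge (ltnW lt_ij) mulr0 subr0.
Qed.

Lemma erk_step_linear (R : realFieldType) (a : nat -> nat -> R) (b : nat -> R)
  (s : nat) (f : R -> R) (tau y K : R) :
  (forall x, f x = K * x) ->
  erk_step a b s f tau y = erk_stab a b s (tau * K) * y.
Proof.
move=> f_lin; set Y := \col_(i < s) nth 0 (erk_stages a f tau y s) i.
have Y_sol : Y = y *: (invmx (1%:M - (tau * K) *: erk_A a s) *m const_mx 1).
  by rewrite scalemxAr -(erk_stages_linear_system a tau y s f_lin) mulKmx ?erk_unitmx.
rewrite /erk_step /=.
have -> : \sum_(i < s) b i * f (nth 0 (erk_stages a f tau y s) i) =
          K * ((\row_(i < s) b i) *m Y) ord0 ord0.
  by rewrite !mxE mulr_sumr; apply: eq_bigr => i _; rewrite !mxE f_lin; ring.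
by rewrite /erk_stab Y_sol -scalemxAr mulmxA mxE; ring.
Qed.

Theorem lemma4p4 (R : realFieldType) (a : nat -> nat -> R) (b : nat -> R)
  (s m : nat) (eps lam zeta eta tau y : R) :
  0 <= eps -> (0 < m)%N -> lam <= 0 -> zeta <= 0 -> 0 < eta -> 0 < tau ->
  mrock2_step a b s eps m (fun x => lam * x) (fun x => zeta * x) tau eta y =
  erk_stab a b s
    (tau * Phi eps m (eta * lam) * (lam + zeta)
       * (1 - eta * lam * alpha eps m / 2 * Phi eps m (eta * lam))) * y.
Proof.
move=> eps_ge0 m_gt0 _ _ eta_gt0 _.
pose K := Phi eps m (eta * lam) * (lam + zeta)
          * (1 - eta * lam * alpha eps m / 2 * Phi eps m (eta * lam)).
have fbar2_lin x : fbar2 eps m (fun x => lam * x) (fun x => zeta * x) eta x = K * x.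
  by rewrite (fbar2_affine eps_ge0 m_gt0 _ (mulrDr lam) (lt0r_neq0 eta_gt0)) /K; ring.
by rewrite /mrock2_step (erk_step_linear _ _ _ _ _ fbar2_lin) /K !mulrA.
Qed.
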